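(* Fix $\delta>0$, $\epsilon>0$, and an integer $L\geq 2$. A learner strategy $\phi\in\Phi_N$ is $(\epsilon,\delta,L)$-secure if and only if it is $(\epsilon,\delta,L)$-private.
   Context: Setting: a learner wants to determine a true value $v^*\in[0,1)$. At step $k$ she submits a query $q_k\in[0,1)$ and receives the response $r_k=\mathbb{I}(v^*\geq q_k)$. A learner strategy $\phi$ of length $N$ uses a random seed $Y$, uniform on $\{1,2,\dots,\mathcal{Y}\}$, and consists of query functions $q_1=\phi_1(Y)$ and $q_k=\phi_k(r_1,\dots,r_{k-1},Y)$ for $k=2,\dots,N$, together with an estimation function $\hat{x}=\phi^E(r_1,\dots,r_N,Y)$. $\Phi_N$ denotes the set of all learner strategies of length $N$. An adversary observes the queries (but not the responses) and knows the strategy $\phi$, including the distribution of $Y$. For $x\in[0,1)$, $\mathcal{Q}(x)$ is the set of query sequences $\overline{q}\in[0,1)^N$ that occur with positive probability (over $Y$) when $v^*=x$, and $\mathcal{Q}=\bigcup_{x\in[0,1)}\mathcal{Q}(x)$. The adversary's information set is $\mathcal{I}(\overline{q})=\{x\in[0,1):\overline{q}\in\mathcal{Q}(x)\}$. A collection of $L$ closed intervals $[a_1,b_1],\dots,[a_L,b_L]$ with $b_j-a_j\leq\delta$ for all $j$ and whose union contains a set $\mathcal{E}\subset\mathbb{R}$ is a $(\delta,L)$ cover of $\mathcal{E}$; $\mathcal{E}$ is $(\delta,L)$-coverable if such a cover exists, and the $\delta$-cover number is $C_\delta(\mathcal{E})=\min\{L\in\mathbb{N}:\mathcal{E}\text{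 is }(\delta,L)\text{-coverable}\}$. $\phi$ is $(\epsilon,\delta,L)$-private if (1) accuracy: $\mathbb{P}(|\hat{x}(x,Y)-x|\leq\epsilon/2)=1$ for all $x\in[0,1)$, where $\hat{x}(x,Y)$ is the learner's estimate when $v^*=x$; and (2) privacy: $C_\delta(\mathcal{I}(\overline{q}))\geq L$ for every $x\in[0,1)$ and every $\overline{q}\in\mathcal{Q}(x)$. An adversary estimator $\hat{x}^a$ is a random variable whose value is determined by the observed query sequence $\overline{q}$ together with an independent randomization. It is $(\delta,L)$-correct with respect to $\overline{q}\in\mathcal{Q}$ if $\mathbb{P}(|\hat{x}^a(\overline{q})-x|\leq\delta/2)>1/L$ for all $x\in\mathcal{I}(\overline{q})$ (probability over the estimator's randomization). $\phi$ is $(\epsilon,\delta,L)$-secure if it satisfies the same accuracy constraint (1) and, for every $\overline{q}\in\mathcal{Q}$, there is no adversary estimator that is $(\delta,L)$-correct with respect to $\overline{q}$; i.e., for every $\overline{q}\in\mathcal{Q}$ and every adversary estimator there exists $x\in\mathcal{I}(\overline{q})$ with $\mathbb{P}(|\hat{x}^a(\overline{q})-x|\leq\delta/2)\leq 1/L$. *)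

From HB Require Import structures.
From mathcomp Require Import all_boot all_order all_algebra.
From mathcomp Require Import all_classical all_reals all_analysis.
Set Implicit Arguments. Unset Strict Implicit. Unset Printing Implicit Defensive.
Import Order.TTheory GRing.Theory Num.Theory.
Local Open Scope classical_set_scope.
Local Open Scope ring_scope.

Definition coverable (R : realType) (delta : R) (L : nat) (E : set R) : Prop :=
  exists a b : nat -> R,
    (forall j, (j < L)%N -> b j - a j <= delta) /\
    (forall x, E x -> exists2 j, (j < L)%N & a j <= x <= b j).

(* C_delta(E) = min { L in N : E is (delta, L)-coverable }
   (an arbitrary value, 0, if no such L exists). *)
Definition cover_number (R : realType) (delta : R) (E : set R) : nat :=
  xget 0%N [set n | coverable delta n E /\
                    (forall m, coverable delta m E -> (n <= m)%N)].

(* The seed Y is uniform on a set of Ys >= 1 elements, represented by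
   'I_Ys (i.e. {0, ..., Ys-1} instead of {1, ..., Ys}).
   The k-th query function phi_k(r_1,...,r_{k-1},Y) is
   [query [:: r_1; ...; r_{k-1}] Y]; the estimation function
   phi^E(r_1,...,r_N,Y) is [estimate [:: r_1; ...; r_N] Y]. *)
Record strategy (R : realType) (N : nat) := Strategy {
  nseeds : nat;
  nseeds_gt0 : (0 < nseeds)%N;
  query : seq bool -> 'I_nseeds -> R;
  query_range : forall rs y, 0 <= query rs y < 1;
  estimate : seq bool -> 'I_nseeds -> R
}.

Section Run.
Variables (R : realType) (N : nat) (phi : strategy R N).

Fixpoint responses (x : R) (y : 'I_(nseeds phi)) (k : nat) : seq bool :=
  match k with
  | 0 => [::]
  | k'.+1 => let rs := responses x y k' in
             rcons rs (@query R N phi rs y <= x)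
  end.

Definition queries (x : R) (y : 'I_(nseeds phi)) : seq R :=
  [seq @query R N phi (responses x y k) y | k <- iota 0 N].

Definition learner_estimate (x : R) (y : 'I_(nseeds phi)) : R :=
  @estimate R N phi (responses x y N) y.

Definition seed_prob (A : {pred 'I_(nseeds phi)}) : R :=
  #|A|%:R / (nseeds phi)%:R.

Definition Qx (x : R) : set (seq R) :=
  [set qs | 0 < seed_prob [pred y | queries x y == qs]].

Definition Qall : set (seq R) :=
  [set qs | exists2 x, 0 <= x < 1 & Qx x qs].

Definition info (qs : seq R) : set R :=
  [set x | 0 <= x < 1 /\ Qx x qs].

Definition accurate (eps : R) : Prop :=
  forall x, 0 <= x < 1 ->
    seed_prob [pred y | `|learner_estimate x y - x| <= eps / 2] = 1.

End Run.

Definition private (R : realType) (N : nat) (eps delta : R) (L : nat)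
    (phi : strategy R N) : Prop :=
  accurate phi eps /\
  forall x, 0 <= x < 1 -> forall qs, Qx phi x qs ->
    (L <= cover_number delta (info phi qs))%N.

(* An adversary estimator for a fixed observed query sequence: a real
   random variable X on an (arbitrary) probability space modelling the
   independent randomization. *)
Definition adversary_correct (R : realType) (N : nat) (delta : R) (L : nat)
    (phi : strategy R N) (qs : seq R)
    (d : measure_display) (Omega : measurableType d)
    (P : probability Omega R) (X : Omega -> R) : Prop :=
  forall x, info phi qs x ->
    lte ((L%:R)^-1)%:E (P [set w | `|X w - x| <= delta / 2]).

Definition secure (R : realType) (N : nat) (eps delta : R) (L : nat)
    (phi : strategy R N) : Prop :=
  accurate phi eps /\
  forall qs, Qall phi qs ->
    forall (d : measure_display) (Omega : measurableType d)
           (P : probability Omega R) (X : Omega -> R),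
      measurable_fun setT X ->
      ~ adversary_correct delta L phi qs P X.

From HB Require Import structures.
From mathcomp Require Import all_boot all_order all_algebra.
From mathcomp Require Import all_classical all_reals all_analysis.
From mathcomp Require Import lra.
Import Order.TTheory GRing.Theory Num.Theory.
Local Open Scope ring_scope.
Local Open Scope classical_set_scope.
Set Implicit Arguments. Unset Strict Implicit.

(* If the information set I(q) contains no n+1 points pairwise more than delta
   apart, a greedy cover starting at inf I(q) needs only n intervals.  Hence
   C_delta(I(q)) >= L yields L such points y_i; the events |X - y_i| <= delta/2
   are then disjoint, so one of them has probability at most 1/L and no
   adversary estimator is correct.  Conversely, if C_delta(I(q)) = k < L, the
   adversary guessing the midpoint of a uniformly chosen interval of an optimal
   cover is within delta/2 of every x in I(q) with probability >= 1/k > 1/L. *)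

Section covers.
Variables (R : realType) (delta : R).

(* a chain has n.+1 points y 0, ..., y n *)
Definition sep_chain (E : set R) (n : nat) (y : nat -> R) : Prop :=
  (forall i, (i <= n)%N -> E (y i)) /\
  (forall i, (i < n)%N -> y i + delta < y i.+1).

Lemma sep_chain_lt E n y : 0 <= delta -> sep_chain E n y ->
  forall i j, (i < j <= n)%N -> y i + delta < y j.
Proof.
move=> delta_ge0 [_ gap] i; elim=> [//|j IH] /andP[]; rewrite ltnS leq_eqVlt.
case/orP=> [/eqP <- /gap //| ij jn].
have := gap j jn; have := IH (introT andP (conj ij (ltnW jn))); lra.
Qed.

(* Greedy cover: the first interval is [inf E, inf E + delta]; a chain in the
   rest of E extends by a point of E close enough to inf E. *)
Lemma coverable_no_sep_chain n (E : set R) : has_lbound E ->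
  (forall y, ~ sep_chain E n y) -> coverable delta n E.
Proof.
elim: n E => [|n IH] E Elb nochain.
  exists (fun=> 0), (fun=> 0); split => // x Ex.
  by case: (nochain (fun=> x)); split.
have [[x0 Ex0]|E0] := pselect (exists x, E x); last first.
  exists (fun=> 0), (fun=> delta); split=> [j _|x Ex]; first by rewrite subr0.
  by case: E0; exists x.
set m := inf E.
have Einf : has_inf E by split; first by exists x0.
have [a [b [ab cov]]] : coverable delta n [set x | E x /\ m + delta < x].
  apply: IH => [|y [yE ygap]].
    by case: Elb => l lE; exists l => x [/lE].
  have [_ my0] := yE 0%N isT.
  have [e Ee ee] := @inf_adherent R E (y 0%N - delta - m) ltac:(lra) Einf.
  apply: (nochain (fun i => if i is i'.+1 then y i' else e)); split.
    by case=> [|i] //= /yE [].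
  by case=> [|i] /= ?; [rewrite /m in ee *; lra | exact: ygap].
exists (fun j => if j is j'.+1 then a j' else m).
exists (fun j => if j is j'.+1 then b j' else m + delta); split.
  by case=> [|j] /= ?; [rewrite addrC addKr | exact: ab].
move=> x Ex; have [xm|mx] := leP x (m + delta).
  by exists 0%N => //; rewrite xm andbT; exact: ge_inf.
by have [j ? ?] := cov x (conj Ex mx); exists j.+1.
Qed.

Lemma cover_numberP m E : coverable delta m E ->
  coverable delta (cover_number delta E) E /\ (cover_number delta E <= m)%N.
Proof.
move=> covm; have ex : exists n, `[< coverable delta n E >] by exists m; apply/asboolP.
case: (ex_minnP ex) => k /asboolP covk kmin.
have [] := @xgetPex _ 0%N
  [set n | coverable delta n E /\ forall m, coverable delta m E -> (n <= m)%N].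
  by exists k; split=> // m' /asboolP/kmin.
by move=> covc cmin; split=> //; exact: cmin.
Qed.

Lemma sep_chain_lt_cover_number n E : has_lbound E ->
  (n < cover_number delta E)%N -> exists y, sep_chain E n y.
Proof.
move=> Elb ncov; apply: contrapT => nochain.
have nochain' y : ~ sep_chain E n y by move=> chain; apply: nochain; exists y.
have [_] := cover_numberP (coverable_no_sep_chain Elb nochain').
by rewrite leqNgt ncov.
Qed.

Lemma coverable_bounded (lo hi : R) E : 0 < delta ->
  (forall x, E x -> lo <= x <= hi) -> exists n, coverable delta n E.
Proof.
move=> delta_gt0 Ebnd.
set n := Num.Def.archi_bound (`|hi - lo| / delta).
exists n; apply: coverable_no_sep_chain => [|y [yE gap]].
  by exists lo => x /Ebnd /andP[].
have spread i : (i <= n)%N -> y 0%N + i%:R * delta <= y i.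
  elim: i => [|i IH] lt_in; first by rewrite mul0r addr0.
  have := gap i lt_in; have := IH (ltnW lt_in); rewrite -natr1; lra.
have : `|hi - lo| / delta < n%:R by apply: archi_boundP; rewrite divr_ge0 // ltW.
rewrite ltr_pdivrMr // => /(le_lt_trans (ler_norm _)).
have := spread n (leqnn n); have /andP[lo_y0 _] := Ebnd _ (yE 0%N isT).
have /andP[_ yn_hi] := Ebnd _ (yE n (leqnn n)); lra.
Qed.
End covers.

Section near_prob.
Variable R : realType.
Local Open Scope ereal_scope.

Lemma prob_trivIset_le_inv d (T : measurableType d) (P : probability T R) n
    (F : 'I_n.+1 -> set T) :
  (forall i, measurable (F i)) -> trivIset setT F ->
  exists i, P (F i) <= (n.+1%:R^-1)%:E.
Proof.
move=> mF tF; apply: contrapT => /forallNP big.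
have finF i : P (F i) = (fine (P (F i)))%:E.
  by rewrite fineK // ge0_fin_numE // (le_lt_trans (probability_le1 P (mF i))) ?ltry.
have := probability_le1 P
  (bigsetU_measurable (index_enum 'I_n.+1) (fun i (_ : predT i) => mF i)).
rewrite (measure_bigsetU_ord P predT mF tF) (eq_bigr _ (fun i _ => finF i)).
rewrite sumEFin lee_fin leNgt => /negP; apply.
have lt_i i : (n.+1%:R^-1 < fine (P (F i)))%R.
  by rewrite -lte_fin -finF ltNge; apply/negP/big.
apply: le_lt_trans (ltr_sum _ (fun i _ => lt_i i)); last first.
  by apply/hasP; exists ord0; rewrite ?mem_index_enum.
by rewrite sumr_const card_ord -[(_^-1 *+ _)%R]mulr_natr mulVf.
Qed.

Lemma measurable_dist_le d (T : measurableType d) (X : T -> R) (x r : R) :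
  measurable_fun setT X -> measurable [set w | `|X w - x| <= r]%R.
Proof.
move=> mX; have := mX measurableT _ (measurable_itv `[x - r, x + r]%R).
rewrite setTI; congr measurable.
by apply/seteqP; split=> w /=; rewrite in_itv /= ler_distl.
Qed.

Lemma sep_chain_near_prob (delta : R) d (T : measurableType d)
    (P : probability T R) (X : T -> R) E n y :
  (0 <= delta)%R -> measurable_fun setT X -> sep_chain delta E n y ->
  exists i : 'I_n.+1, P [set w | `|X w - y i| <= delta / 2]%R <= (n.+1%:R^-1)%:E.
Proof.
move=> delta_ge0 mX chain; apply: prob_trivIset_le_inv => [i|].
  exact: measurable_dist_le.
apply/trivIsetP => i j _ _ ij.
wlog lt_ij : i j ij / (i < j)%N.
  move=> W; case: (ltngtP i j) => [|lt_ji|/val_inj eq_ij]; first exact: W.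
    by rewrite setIC; apply: W; rewrite // eq_sym.
  by rewrite eq_ij eqxx in ij.
have := sep_chain_lt delta_ge0 chain (introT andP (conj lt_ij (ltn_ord j))).
move=> sep; apply/seteqP; split=> // w [] /=.
by rewrite !ler_distl => /andP[? ?] /andP[? ?]; lra.
Qed.

Lemma mnormalizeE d (T : measurableType d) (mu : {measure set T -> \bar R})
    (P : probability T R) (m : R) :
  (0 < m)%R -> mu setT = m%:E -> forall A, mnormalize mu P A = mu A * (m^-1)%:E.
Proof. by move=> m_gt0 muT A; rewrite /mnormalize muT /= eqe gt_eqF. Qed.

Lemma coverable_near_prob (delta : R) k E : (0 < k)%N -> coverable delta k E ->
  exists P : probability R R,
    forall x, E x -> (k%:R^-1)%:E <= P [set w | `|w - x| <= delta / 2]%R.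
Proof.
move=> k_gt0 [a [b [ab cov]]].
pose mu := msum (fun j => @dirac _ R ((a j + b j) / 2)%R R) k.
have muT : mu setT = k%:R%:E.
  rewrite /mu /msum /=; under eq_bigr do rewrite diracT.
  by rewrite sumEFin sumr_const card_ord.
have k_gt0R : (0 < k%:R :> R)%R by rewrite ltr0n.
pose Pr := mnormalize mu (@dirac _ R 0%R R).
suff Pr_ge x : E x -> (k%:R^-1)%:E <= Pr [set w | `|w - x| <= delta / 2]%R.
  by exists Pr.
move=> Ex; rewrite /Pr (mnormalizeE _ k_gt0R muT).
have [j jk /andP[ajx xbj]] := cov x Ex.
have mu_ge1 : 1 <= mu [set w | `|w - x| <= delta / 2]%R.
  rewrite /mu /msum /= (bigD1 (Ordinal jk)) //=.
  apply: le_trans (leeDl _ (sume_ge0 _ _)); last by move=> *; exact: measure_ge0.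
  rewrite diracE mem_set //= ler_distl; have := ab j jk; lra.
by apply: le_trans (lee_wpmul2r _ mu_ge1); rewrite ?mul1e // lee_fin invr_ge0.
Qed.

End near_prob.

Section strategy.
Variables (R : realType) (N : nat) (phi : strategy R N).

Lemma info_bounded qs x : info phi qs x -> 0 <= x <= 1.
Proof. by move=> [/andP[x_ge0 /ltW x_le1] _]; rewrite x_ge0. Qed.

Lemma secure_of_private (eps delta : R) L : 0 <= delta -> (0 < L)%N ->
  private eps delta L phi -> secure eps delta L phi.
Proof.
move=> delta_ge0 L_gt0 [acc priv].
split=> // qs [x x01 Qx_qs] d Omega P X mX correct.
have info_lb : has_lbound (info phi qs) by exists 0 => z /info_bounded /andP[].
have [n L_eq] : exists n, L = n.+1 by exists L.-1; rewrite prednK.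
rewrite L_eq in correct priv.
have [y chain] := sep_chain_lt_cover_number info_lb (priv x x01 qs Qx_qs).
have [i Pi_le] := sep_chain_near_prob P delta_ge0 mX chain.
have := correct (y i) (chain.1 i (ltn_ord i)).
by rewrite ltNge Pi_le.
Qed.

Lemma private_of_secure (eps delta : R) L : 0 < delta ->
  secure eps delta L phi -> private eps delta L phi.
Proof.
move=> delta_gt0 [acc sec]; split=> // x x01 qs Qx_qs.
rewrite leqNgt; apply/negP => kL.
have [n /cover_numberP[covk _]] := coverable_bounded delta_gt0 (@info_bounded qs).
have k_gt0 : (0 < cover_number delta (info phi qs))%N.
  by have [a [b [_ /(_ x (conj x01 Qx_qs))[j + _]]]] := covk; apply: leq_ltn_trans.
have [Pr Pr_ge] := coverable_near_prob k_gt0 covk.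
apply: (sec qs (ex_intro2 _ _ x x01 Qx_qs) _ _ Pr id (@measurable_id _ _ setT)) => z Ez.
apply: lt_le_trans (Pr_ge z Ez).
by rewrite lte_fin ltf_pV2 ?posrE ?ltr0n ?ltr_nat // (ltn_trans k_gt0).
Qed.

End strategy.

Theorem proposition2 (R : realType) (delta eps : R) (L N : nat)
  (hdelta : 0 < delta) (heps : 0 < eps) (hL : (2 <= L)%N)
  (phi : strategy R N) :
  secure eps delta L phi <-> private eps delta L phi.
Proof.
split; first exact: private_of_secure.
by apply: secure_of_private; [exact: ltW | exact: ltn_trans hL].
Qed.
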